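(* Let $G$ be a group with a gliding system and $\mathcal{D}\subset G$. The glide complex $X_{\mathcal{D}}$ is nonpositively curved if and only if $\mathcal{D}$ is regular and satisfies the cube condition.
   Context: Gliding system $(\mathcal{G},\mathcal{I})$ in $G$: $\mathcal{G}\subset G\setminus\{1\}$ closed under inversion (glides), $\mathcal{I}\subset\mathcal{G}\times\mathcal{G}$ (independence) with $(s^{-1},t),(t,s)\in\mathcal{I}$ and $st=ts\ne1$ whenever $(s,t)\in\mathcal{I}$. Pre-cubic set: finite set $S$ of pairwise independent glides, $[S]=\prod_{s\in S}s$; cubic: pre-cubic with $[T_1]\ne[T_2]$ for distinct $T_1,T_2\subset S$. Glide complex $X_G$: cubed complex with one $k$-cube for each equivalence class of based cubes $(A,S)$ ($A\in G$, $S$ cubic of size $k$) under $(A,S)\sim([T]A,(S\setminus T)\cup\{t^{-1}:t\in T\})$, $T\subset S$; vertices of the cube are $[T]A$ ($T\subset S$), faces are cubes of $(A,S')$, $S'\subset S$; 0-skeleton $G$. $X_{\mathcal{D}}$: subcomplex of cubes all of whose vertices lie in $\mathcal{D}$. $\mathcal{D}$ is regular if for every $A\in\mathcal{D}$ every pre-cubic $S$ with $sA\in\mathcal{D}$ ($s\in S$) and $stA\in\mathcal{D}$ (distinct $s,t\in S$) is cubic. $\mathcal{D}$ satisfies the cube condition if for every $A\in\mathcal{D}$ and pairwise independent glides $s_1,s_2,s_3$ with $s_1A,s_2A,s_3A,s_1s_2A,s_1s_3A,s_2s_3A\in\mathcal{D}$ one has $s_1s_2s_3A\in\mathcal{D}$.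 A cubed complex is nonpositively curved if the link of every $0$-cell is a simplicial complex and is a flag complex. *)

(* an arbitrary (possibly infinite) group given by explicit
   operations, a gliding system on it, and the glide complex X_D described
   combinatorially (based cubes, corners, links). *)
From Stdlib Require Import List.
Import ListNotations.
Set Implicit Arguments.

Section Glide.
Context {G : Type} (mul : G -> G -> G) (one : G) (inv : G -> G).

Definition is_group : Prop :=
  (forall x y z, mul x (mul y z) = mul (mul x y) z) /\
  (forall x, mul one x = x) /\ (forall x, mul x one = x) /\
  (forall x, mul (inv x) x = one) /\ (forall x, mul x (inv x) = one).

Context (glide : G -> Prop) (ind : G -> G -> Prop).

Definition gliding_system : Prop :=
  (forall s, glide s -> s <> one) /\
  (forall s, glide s -> glide (inv s)) /\
  (forall s t, ind s t -> glide s /\ glide t) /\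
  (forall s t, ind s t ->
     ind (inv s) t /\ ind t s /\ mul s t = mul t s /\ mul s t <> one).

(* finite sets of group elements are duplicate-free lists *)
Definition prodl (l : list G) : G := fold_right mul one l.
Definition subl (T S : list G) : Prop := NoDup T /\ incl T S.
Definition same_set (S S' : list G) : Prop := forall x, In x S <-> In x S'.

Definition precubic (S : list G) : Prop :=
  NoDup S /\ (forall s, In s S -> glide s) /\
  (forall s t, In s S -> In t S -> s <> t -> ind s t).

Definition cubic (S : list G) : Prop :=
  precubic S /\
  forall T1 T2, subl T1 S -> subl T2 S -> prodl T1 = prodl T2 -> same_set T1 T2.

Definition flipped (S U S' : list G) : Prop :=
  NoDup S' /\
  forall x, In x S' <-> ((In x S /\ ~ In x U) \/ (exists u, In u U /\ x = inv u)).

Variable D : G -> Prop.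

(* the based cube (A,S) gives a cube of X_D: S cubic, all vertices [T]A in D *)
Definition in_XD (A : G) (S : list G) : Prop :=
  cubic S /\ forall T, subl T S -> D (mul (prodl T) A).

(* A corner of a cube: based cube (B,S) together with the vertex position T ⊂ S
   (the vertex [T]B). *)
Record corner := Corner { cbase : G; cset : list G; cpos : list G }.

Definition corner_at (A : G) (c : corner) : Prop :=
  in_XD (cbase c) (cset c) /\ subl (cpos c) (cset c) /\
  mul (prodl (cpos c)) (cbase c) = A.

(* Identification of corners induced by the equivalence of based cubes
   (B,S) ~ ([U]B, (S\U) ∪ U^-1): the vertex [T]B has new position
   (T\U) ∪ {u^-1 : u ∈ U\T}. *)
Definition corner_equiv (c c' : corner) : Prop :=
  exists U, subl U (cset c) /\
    cbase c' = mul (prodl U) (cbase c) /\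
    flipped (cset c) U (cset c') /\
    NoDup (cpos c') /\
    forall x, In x (cpos c') <->
      ((In x (cpos c) /\ ~ In x U) \/
       (exists u, In u U /\ ~ In u (cpos c) /\ x = inv u)).

(* f is the corner, at the same vertex, of the face of c spanned by R ⊂ cset c,
   namely the based cube ([cpos c \ R] (cbase c), R) at position cpos c ∩ R. *)
Definition face_corner (c : corner) (R : list G) (f : corner) : Prop :=
  subl R (cset c) /\ NoDup (cset f) /\ same_set (cset f) R /\
  NoDup (cpos f) /\ (forall x, In x (cpos f) <-> In x (cpos c) /\ In x R) /\
  exists W, NoDup W /\ (forall x, In x W <-> In x (cpos c) /\ ~ In x R) /\
    cbase f = mul (prodl W) (cbase c).

(* Link of the vertex A in X_D: simplices are corners at A of cubes of
   positive dimension (a corner of a k-cube is a (k-1)-simplex); vertices are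
   corners of edges; the vertices of a simplex are the corners of its edges. *)
Definition link_simplex (A : G) (c : corner) : Prop :=
  corner_at A c /\ cset c <> [].
Definition link_vertex (A : G) (v : corner) : Prop :=
  corner_at A v /\ length (cset v) = 1.
Definition vertex_of (c v : corner) : Prop :=
  exists s, In s (cset c) /\ face_corner c [s] v.

(* The link at A is a simplicial complex: each simplex has pairwise distinct
   vertices, and a simplex is determined by its vertex set. *)
Definition link_simplicial (A : G) : Prop :=
  (forall c s1 s2 v1 v2, link_simplex A c -> In s1 (cset c) -> In s2 (cset c) ->
     face_corner c [s1] v1 -> face_corner c [s2] v2 -> corner_equiv v1 v2 ->
     s1 = s2) /\
  (forall c1 c2, link_simplex A c1 -> link_simplex A c2 ->
     (forall v, vertex_of c1 v -> exists v', vertex_of c2 v' /\ corner_equiv v v') ->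
     (forall v, vertex_of c2 v -> exists v', vertex_of c1 v' /\ corner_equiv v v') ->
     corner_equiv c1 c2).

Definition link_flag (A : G) : Prop :=
  forall V : list corner, V <> [] ->
    (forall v, In v V -> link_vertex A v) ->
    (forall v1 v2, In v1 V -> In v2 V -> ~ corner_equiv v1 v2 ->
       exists e w1 w2, link_simplex A e /\ length (cset e) = 2 /\
         vertex_of e w1 /\ vertex_of e w2 /\
         corner_equiv v1 w1 /\ corner_equiv v2 w2) ->
    exists c, link_simplex A c /\
      (forall v, In v V -> exists w, vertex_of c w /\ corner_equiv v w) /\
      (forall w, vertex_of c w -> exists v, In v V /\ corner_equiv v w).

(* 0-cells of X_D are the elements of D *)
Definition nonpositively_curved : Prop :=
  forall A, D A -> link_simplicial A /\ link_flag A.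

Definition regular : Prop :=
  forall A, D A -> forall S, precubic S ->
    (forall s, In s S -> D (mul s A)) ->
    (forall s t, In s S -> In t S -> s <> t -> D (mul s (mul t A))) ->
    cubic S.

Definition cube_condition : Prop :=
  forall A s1 s2 s3, D A ->
    glide s1 -> glide s2 -> glide s3 ->
    ind s1 s2 -> ind s1 s3 -> ind s2 s3 ->
    D (mul s1 A) -> D (mul s2 A) -> D (mul s3 A) ->
    D (mul s1 (mul s2 A)) -> D (mul s1 (mul s3 A)) -> D (mul s2 (mul s3 A)) ->
    D (mul s1 (mul s2 (mul s3 A))).

End Glide.

(* A based cube (B,S) and its rebasing ([U]B, (S\U) ∪ U^-1)
   describe the same cube: the vertex [V]([U]B) equals [rebase_sub S U V]B
   (rebase_prod), so membership in X_D is invariant under rebasing, and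
   rebasings compose, making equivalence of corners transitive.  Every corner
   at a vertex A is equivalent to the corner at A of a cube based at A, its
   normal form.  A link vertex at A is the corner of an edge and is
   determined, up to equivalence, by the glide d pointing along it (the other
   endpoint is dA); the directions of the vertices of a simplex of the link
   are exactly the glides of its normal form.  From this:
   - the link is always simplicial (distinct glides give distinct
     directions, and the vertices of a simplex determine its normal form);
   - regularity plus the cube condition make it flag: the directions of a
     pairwise joined family of link vertices form a cubic set, whose cube
     lies in X_D by the cube condition (cube_condition_vertices);
   - conversely, flagness fills every pre-cubic set whose 1- and 2-vertices
     lie in D with a cube of X_D (npc_fills_cubes), which gives both
     regularity and the cube condition. *)

From Stdlib Require Import List Permutation ClassicalEpsilon Classical Lia.
Import ListNotations.

(* Classical decision of a proposition as a boolean, so that lists can be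
   filtered by arbitrary predicates. *)
Definition holds (P : Prop) : bool :=
  if excluded_middle_informative P then true else false.

Lemma holds_true (P : Prop) : holds P = true <-> P.
Proof.
  unfold holds; destruct (excluded_middle_informative P); split; intros; auto; discriminate.
Qed.

Lemma holds_false (P : Prop) : holds P = false <-> ~ P.
Proof.
  unfold holds; destruct (excluded_middle_informative P); split; intros;
    auto; try discriminate; contradiction.
Qed.

Section Lists.
Context {X : Type}.

Lemma perm_filter_split (f : X -> bool) (l : list X) :
  Permutation l (filter f l ++ filter (fun x => negb (f x)) l).
Proof.
  induction l as [|a l IH]; simpl; auto.
  destruct (f a); simpl; auto.
  apply Permutation_cons_app; auto.
Qed.

Lemma empty_list (l : list X) : (forall x, ~ In x l) -> l = [].
Proof. destruct l as [|a l]; auto. intros H; exfalso; apply (H a); simpl; auto. Qed.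

Lemma nodup_singleton (l : list X) (s : X) :
  NoDup l -> (forall x, In x l <-> x = s) -> l = [s].
Proof.
  intros Hn H. destruct l as [|a l].
  - exfalso. apply (proj2 (H s)); auto.
  - assert (a = s) by (apply H; simpl; auto). subst a.
    destruct l as [|b l]; auto. exfalso.
    assert (b = s) by (apply H; simpl; auto). subst b.
    inversion Hn; subst. simpl in *. tauto.
Qed.

Lemma subl_singleton (U : list X) (s : X) : subl U [s] -> U = [] \/ U = [s].
Proof.
  intros [Hn Hi]. destruct U as [|a U]; auto. right.
  apply nodup_singleton; auto. intros x; split; intros Hx.
  - apply Hi in Hx. destruct Hx as [->|[]]; auto.
  - subst x. destruct (Hi a) as [->|[]]; simpl; auto.
Qed.

Lemma subl_pair (T : list X) (s t : X) : subl T [s; t] ->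
  T = [] \/ T = [s] \/ T = [t] \/ T = [s; t] \/ T = [t; s].
Proof.
  intros [Hn Hi].
  assert (Hm : forall x, In x T -> x = s \/ x = t)
    by (intros x Hx; apply Hi in Hx; simpl in Hx; intuition).
  destruct T as [|a [|b [|c T]]]; auto.
  - destruct (Hm a) as [->| ->]; simpl; auto.
  - inversion Hn; subst. assert (a <> b) by (intros ->; simpl in *; tauto).
    destruct (Hm a) as [->| ->], (Hm b) as [->| ->]; simpl; auto; contradiction.
  - exfalso. inversion Hn as [|? ? H1 Hn1]; subst. inversion Hn1 as [|? ? H2 _]; subst.
    destruct (Hm a) as [->| ->], (Hm b) as [->| ->], (Hm c) as [->| ->];
      simpl in *; tauto.
Qed.

Lemma choose_images {Y : Type} (R : X -> Y -> Prop) (V : list X) :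
  (forall v, In v V -> exists y, R v y) ->
  exists W, NoDup W /\ (forall y, In y W -> exists v, In v V /\ R v y) /\
    (forall v, In v V -> exists y, In y W /\ R v y).
Proof.
  induction V as [|v V IH]; intros H.
  - exists []. repeat split; try constructor; intros ? [].
  - destruct IH as [W [Hn [H1 H2]]]; [intros; apply H; simpl; auto|].
    destruct (H v) as [y Hy]; [simpl; auto|].
    destruct (classic (In y W)) as [Hin|Hin].
    + exists W. split; [auto|split].
      * intros x Hx. destruct (H1 x Hx) as [w [Hw Hr]]. exists w; simpl; auto.
      * intros w [<-|Hw]; eauto.
    + exists (y :: W). split; [constructor; auto|split].
      * intros x [<-|Hx]; [exists v; simpl; auto|].
        destruct (H1 x Hx) as [w [Hw Hr]]. exists w; simpl; auto.
      * intros w [<-|Hw]; [exists y; simpl; auto|].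
        destruct (H2 w Hw) as [x [Hx Hr]]. exists x; simpl; auto.
Qed.

End Lists.

Section GlideComplex.
Context {G : Type} (mul : G -> G -> G) (one : G) (inv : G -> G).
Hypothesis HG : is_group mul one inv.
Context (glide : G -> Prop) (ind : G -> G -> Prop).
Hypothesis HGS : gliding_system mul one inv glide ind.

Local Notation pr := (prodl mul one).
Local Notation precubic := (precubic glide ind).

Lemma mul_assoc x y z : mul x (mul y z) = mul (mul x y) z. Proof. apply HG. Qed.
Lemma mul_1l x : mul one x = x. Proof. apply HG. Qed.
Lemma mul_1r x : mul x one = x. Proof. apply HG. Qed.
Lemma mul_Vl x : mul (inv x) x = one. Proof. apply HG. Qed.
Lemma mul_Vr x : mul x (inv x) = one. Proof. apply HG. Qed.

Lemma mul_cancel_l a x y : mul a x = mul a y -> x = y.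
Proof.
  intros H. rewrite <- (mul_1l x), <- (mul_1l y), <- (mul_Vl a), <- !mul_assoc, H; auto.
Qed.

Lemma mul_cancel_r a x y : mul x a = mul y a -> x = y.
Proof.
  intros H. rewrite <- (mul_1r x), <- (mul_1r y), <- (mul_Vr a), !mul_assoc, H; auto.
Qed.

Lemma inv_involutive x : inv (inv x) = x.
Proof. apply (mul_cancel_l (inv x)). rewrite mul_Vr, mul_Vl; auto. Qed.

Lemma inv_inj x y : inv x = inv y -> x = y.
Proof. intros H. rewrite <- (inv_involutive x), H, inv_involutive; auto. Qed.

Lemma mul_KV a x : mul (inv a) (mul a x) = x.
Proof. rewrite mul_assoc, mul_Vl, mul_1l; auto. Qed.

Lemma mul_VK a x : mul a (mul (inv a) x) = x.
Proof. rewrite mul_assoc, mul_Vr, mul_1l; auto. Qed.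

Lemma glide_ne1 s : glide s -> s <> one. Proof. apply HGS. Qed.
Lemma glide_inv s : glide s -> glide (inv s). Proof. apply HGS. Qed.
Lemma ind_sym s t : ind s t -> ind t s. Proof. apply HGS. Qed.
Lemma ind_invl s t : ind s t -> ind (inv s) t. Proof. apply HGS. Qed.
Lemma ind_invr s t : ind s t -> ind s (inv t).
Proof. intros H. apply ind_sym, ind_invl, ind_sym, H. Qed.
Lemma ind_comm s t : ind s t -> mul s t = mul t s. Proof. apply HGS. Qed.
Lemma ind_ne1 s t : ind s t -> mul s t <> one. Proof. apply HGS. Qed.

(* No glide is independent of itself, since (s^-1, s) would be independent. *)
Lemma ind_neq s t : ind s t -> s <> t.
Proof. intros H <-. apply (ind_ne1 _ _ (ind_invl _ _ H)), mul_Vl. Qed.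

Definition commuting (C : list G) : Prop :=
  forall x y, In x C -> In y C -> mul x y = mul y x.

Lemma commuting_incl C C' : incl C' C -> commuting C -> commuting C'.
Proof. intros Hi H x y Hx Hy. apply H; auto. Qed.

Lemma prodl_app l1 l2 : pr (l1 ++ l2) = mul (pr l1) (pr l2).
Proof.
  induction l1 as [|a l1 IH]; simpl; [rewrite mul_1l; auto|rewrite IH, mul_assoc; auto].
Qed.

Lemma prodl_cons_act x l A : mul (pr (x :: l)) A = mul x (mul (pr l) A).
Proof. simpl. rewrite mul_assoc; auto. Qed.

Lemma prodl_perm l1 l2 : Permutation l1 l2 -> commuting l1 -> pr l1 = pr l2.
Proof.
  induction 1 as [|x l l' P IH|x y l|l l' l'' P1 IH1 P2 IH2]; intros Hc; simpl; auto.
  - f_equal. apply IH. intros a b Ha Hb. apply Hc; simpl; auto.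
  - rewrite !mul_assoc, (Hc y x); simpl; auto.
  - rewrite IH1; auto. apply IH2.
    intros a b Ha Hb. apply Hc; apply Permutation_in with l'; auto; apply Permutation_sym; auto.
Qed.

Lemma mul_prodl_comm a l :
  (forall y, In y l -> mul a y = mul y a) -> mul a (pr l) = mul (pr l) a.
Proof.
  induction l as [|b l IH]; intros H; simpl; [rewrite mul_1l, mul_1r; auto|].
  rewrite mul_assoc, H by (simpl; auto).
  rewrite <- mul_assoc, IH by (intros; apply H; simpl; auto).
  apply mul_assoc.
Qed.

Lemma prodl_map_inv l : commuting (l ++ map inv l) -> mul (pr (map inv l)) (pr l) = one.
Proof.
  induction l as [|a l IH]; intros Hc; simpl; [apply mul_1l|].
  assert (Hc' : commuting (l ++ map inv l)).
  { apply (commuting_incl ((a :: l) ++ map inv (a :: l))); auto.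
    intros x Hx. simpl. rewrite in_app_iff in *. simpl. tauto. }
  rewrite <- mul_assoc, (mul_assoc (pr (map inv l)) a (pr l)).
  rewrite <- (mul_prodl_comm a (map inv l)).
  - rewrite <- mul_assoc, IH, mul_1r by auto. apply mul_Vl.
  - intros y Hy. apply Hc; simpl; rewrite in_app_iff; simpl; auto.
Qed.

Definition letters (S : list G) : list G := S ++ map inv S.

Lemma letters_l S x : In x S -> In x (letters S).
Proof. intros; apply in_or_app; auto. Qed.

Lemma letters_r S x : In x S -> In (inv x) (letters S).
Proof. intros; apply in_or_app; right; apply in_map; auto. Qed.

Lemma precubic_letters_commute S : precubic S -> commuting (letters S).
Proof.
  assert (Hcases : forall x, In x (letters S) -> exists s, In s S /\ (x = s \/ x = inv s)).
  { intros x Hx. apply in_app_or in Hx as [Hx|Hx]; [exists x; auto|].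
    apply in_map_iff in Hx as [s [E Hs]]. exists s; auto. }
  intros [_ [_ Hi]] x y Hx Hy.
  destruct (Hcases x Hx) as [s [Hs Ex]], (Hcases y Hy) as [t [Ht Ey]].
  destruct (classic (s = t)) as [<-|E].
  - destruct Ex, Ey; subst; auto; rewrite ?mul_Vl, ?mul_Vr; auto.
  - specialize (Hi _ _ Hs Ht E).
    destruct Ex, Ey; subst; apply ind_comm; auto using ind_invl, ind_invr.
Qed.

Lemma precubic_commuting S l : precubic S -> incl l (letters S) -> commuting l.
Proof. intros H Hi. apply (commuting_incl _ _ Hi), precubic_letters_commute, H. Qed.

Lemma precubic_commuting_sub S l : precubic S -> incl l S -> commuting l.
Proof. intros H Hi. apply (precubic_commuting S); auto. intros x Hx; apply letters_l, Hi, Hx. Qed.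

Lemma precubic_inv_mem S s : precubic S -> In s S -> In (inv s) S -> inv s = s.
Proof.
  intros [_ [_ Hi]] Hs Hs'. apply NNPP. intros E.
  apply (ind_ne1 _ _ (Hi _ _ Hs Hs' (fun e => E (eq_sym e)))), mul_Vr.
Qed.

(* The based cube (B,S) is identified with ([U]B, S') where
   S' = (S \ U) ∪ U^-1 ([flipped inv S U S']).  The vertex [V]([U]B) of the
   new description, V ⊂ S', is the vertex [rebase_sub S U V]B of the old one:
   a letter of S is used iff it is an unflipped letter of V, or a flipped
   letter u ∈ U whose inverse is not in V. *)
Definition rebase_sub (S U V : list G) : list G :=
  filter (fun x => holds ((In x V /\ ~ In x U) \/ (In x U /\ ~ In (inv x) V))) S.

Lemma rebase_sub_In S U V x : In x (rebase_sub S U V) <->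
  In x S /\ ((In x V /\ ~ In x U) \/ (In x U /\ ~ In (inv x) V)).
Proof. unfold rebase_sub. rewrite filter_In, holds_true. tauto. Qed.

Lemma rebase_sub_subl S U V : NoDup S -> subl (rebase_sub S U V) S.
Proof.
  intros H. split; [apply NoDup_filter; auto|].
  intros x Hx; apply rebase_sub_In in Hx; tauto.
Qed.

Lemma flipped_letters S U S' : incl U S -> flipped inv S U S' -> incl S' (letters S).
Proof.
  intros Hu [_ H] x Hx. apply H in Hx as [[Hx _]|[u [Hu' ->]]].
  - apply letters_l; auto.
  - apply letters_r; auto.
Qed.

Lemma flipped_cases S U S' x : precubic S -> incl U S -> flipped inv S U S' -> In x S' ->
  (In x S /\ ~ In x U) \/ (exists u, In u U /\ x = inv u /\ ~ (In x S /\ ~ In x U)).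
Proof.
  intros HS HU [_ HF] Hx. apply HF in Hx as [H|[u [Hu ->]]]; auto.
  right. exists u; repeat split; auto. intros [H1 H2].
  apply H2. rewrite (precubic_inv_mem S u HS); auto.
Qed.

Section Rebase.
Variables (S U S' V : list G).
Hypotheses (HS : precubic S) (HU : subl U S) (HF : flipped inv S U S') (HV : subl V S').

Lemma rebase_flipped_part :
  Permutation (filter (fun x => negb (holds (In x S /\ ~ In x U))) V)
              (map inv (filter (fun u => holds (In (inv u) V)) U)).
Proof.
  destruct HU as [HUn HUi], HV as [HVn HVi], HF as [_ HF'].
  apply NoDup_Permutation.
  - apply NoDup_filter; auto.
  - apply FinFun.Injective_map_NoDup; [intros a b; apply inv_inj|apply NoDup_filter; auto].
  - intros x. rewrite filter_In, in_map_iff, Bool.negb_true_iff, holds_false. split.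
    + intros [Hx Hb]. assert (Hx' := HVi x Hx). apply HF' in Hx' as [Hx'|[u [Hu ->]]];
        [contradiction|].
      exists u. rewrite filter_In, holds_true. auto.
    + intros [u [<- Hu]]. rewrite filter_In, holds_true in Hu. destruct Hu as [Hu Hv].
      split; auto. intros [Hs Hn].
      apply Hn. rewrite (precubic_inv_mem S u HS); auto.
Qed.

Lemma rebase_sub_perm :
  Permutation (rebase_sub S U V)
    (filter (fun x => holds (In x S /\ ~ In x U)) V ++
     filter (fun u => negb (holds (In (inv u) V))) U).
Proof.
  destruct HU as [HUn HUi], HV as [HVn HVi].
  apply NoDup_Permutation.
  - apply NoDup_filter, HS.
  - apply NoDup_app; try apply NoDup_filter; auto.
    intros a Ha Hb. rewrite filter_In, holds_true in Ha. rewrite filter_In in Hb. tauto.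
  - intros x. rewrite rebase_sub_In, in_app_iff, !filter_In, holds_true,
      Bool.negb_true_iff, holds_false.
    split; [intros [Hx [[H1 H2]|[H1 H2]]]; auto|intros [[H1 [H2 H3]]|[H1 H2]]; split; auto].
Qed.

(* The product formula behind the identification of based cubes:
   [rebase_sub S U V] = [V][U]. *)
Lemma rebase_prod : pr (rebase_sub S U V) = mul (pr V) (pr U).
Proof.
  set (U1 := filter (fun u => holds (In (inv u) V)) U).
  set (U2 := filter (fun u => negb (holds (In (inv u) V))) U).
  set (Va := filter (fun x => holds (In x S /\ ~ In x U)) V).
  set (Vb := filter (fun x => negb (holds (In x S /\ ~ In x U))) V).
  assert (HcV : commuting V)
    by (apply (precubic_commuting S); auto; intros x Hx;
        apply (flipped_letters S U S'); [apply HU|apply HF|apply HV, Hx]).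
  assert (HcU : commuting U) by (apply (precubic_commuting_sub S); auto; apply HU).
  assert (HcU1 : commuting (U1 ++ map inv U1)).
  { apply (precubic_commuting S); auto. intros x Hx. apply in_app_or in Hx as [Hx|Hx].
    - apply letters_l, HU. unfold U1 in Hx; rewrite filter_In in Hx; tauto.
    - apply in_map_iff in Hx as [u [<- Hu]]. apply letters_r, HU.
      unfold U1 in Hu; rewrite filter_In in Hu; tauto. }
  rewrite (prodl_perm _ _ (perm_filter_split (fun x => holds (In x S /\ ~ In x U)) V) HcV),
          (prodl_perm _ _ (perm_filter_split (fun u => holds (In (inv u) V)) U) HcU),
          (prodl_perm _ _ rebase_sub_perm).
  2: { apply (precubic_commuting_sub S); auto. apply rebase_sub_subl, HS. }
  fold U1 U2 Va Vb. rewrite !prodl_app.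
  rewrite (prodl_perm Vb (map inv U1) rebase_flipped_part).
  2: { apply (commuting_incl V); auto. intros x Hx. unfold Vb in Hx.
       rewrite filter_In in Hx. tauto. }
  rewrite <- !mul_assoc, (mul_assoc (pr (map inv U1))), prodl_map_inv, mul_1l; auto.
Qed.

Lemma rebase_sub_incl T1 T2 : incl T1 S' ->
  same_set (rebase_sub S U T1) (rebase_sub S U T2) -> incl T1 T2.
Proof.
  destruct HF as [_ HF'].
  intros HT Hs x Hx. assert (Hx' := HT x Hx). apply HF' in Hx' as [[H1 H2]|[u [Hu ->]]].
  - assert (H : In x (rebase_sub S U T2)) by (apply Hs, rebase_sub_In; auto).
    apply rebase_sub_In in H. tauto.
  - assert (H : ~ In u (rebase_sub S U T2)).
    { intros H. apply Hs, rebase_sub_In in H as [_ [[_ H]|[_ H]]]; contradiction. }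
    apply NNPP. intros H'. apply H, rebase_sub_In. split; [apply HU|]; auto.
Qed.

End Rebase.

Lemma precubic_flipped S U S' : precubic S -> incl U S -> flipped inv S U S' -> precubic S'.
Proof.
  intros HP HU HF. split; [apply HF|split].
  - intros x Hx.
    destruct (flipped_cases S U S' x HP HU HF Hx) as [[H _]|[u [Hu [-> _]]]].
    + apply HP; auto.
    + apply glide_inv, HP, HU, Hu.
  - assert (Hi := proj2 (proj2 HP)). intros x y Hx Hy Hxy.
    destruct (flipped_cases S U S' x HP HU HF Hx) as [[H1 H2]|[u [Hu [-> _]]]];
    destruct (flipped_cases S U S' y HP HU HF Hy) as [[H3 H4]|[w [Hw [-> _]]]].
    + apply Hi; auto.
    + apply ind_invr, Hi; auto. intros ->; contradiction.
    + apply ind_invl, Hi; auto. intros ->; contradiction.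
    + apply ind_invl, ind_invr, Hi; auto. intros ->; contradiction.
Qed.

(* How a vertex position P ⊂ S changes under rebasing at U: letters of P
   outside U stay, letters of U outside P appear inverted. *)
Definition moved (P U P' : list G) : Prop :=
  NoDup P' /\ forall x, In x P' <->
    ((In x P /\ ~ In x U) \/ (exists u, In u U /\ ~ In u P /\ x = inv u)).

Section Compose.
Variables (S U S' V S'' : list G).
Hypotheses (HS : precubic S) (HU : subl U S) (HF1 : flipped inv S U S') (HV : subl V S')
  (HF2 : flipped inv S' V S'').

Lemma flipped_compose : flipped inv S (rebase_sub S U V) S''.
Proof.
  destruct HF1 as [_ HF1'], HF2 as [HN2 HF2'], HV as [_ HVi].
  split; [exact HN2|]. intros x. rewrite HF2'. split.
  - intros [[Hx HxV]|[v [Hv ->]]].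
    + apply HF1' in Hx as [[Hx HxU]|[u [Hu ->]]].
      * left. split; auto. intros Hw. apply rebase_sub_In in Hw. tauto.
      * right. exists u. split; auto. apply rebase_sub_In. split; [apply HU|]; auto.
    + assert (Hv' := HVi v Hv). apply HF1' in Hv' as [[Hv1 Hv2]|[u [Hu ->]]].
      * right. exists v; split; auto. apply rebase_sub_In; auto.
      * rewrite inv_involutive. left. split; [apply HU; auto|]. intros Hw.
        apply rebase_sub_In in Hw as [_ [[_ H]|[_ H]]]; contradiction.
  - intros [[Hx Hw]|[w [Hw ->]]].
    + destruct (classic (In x U)) as [HxU|HxU].
      * right. exists (inv x). rewrite inv_involutive. split; auto.
        apply NNPP. intros H. apply Hw, rebase_sub_In. auto.
      * left. split; [apply HF1'; auto|]. intros H. apply Hw, rebase_sub_In. auto.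
    + apply rebase_sub_In in Hw as [HwS [[H1 H2]|[H1 H2]]].
      * right. exists w; auto.
      * left. split; auto. apply HF1'. right. exists w; auto.
Qed.

Lemma moved_compose P P' P'' : incl P S -> moved P U P' -> moved P' V P'' ->
  moved P (rebase_sub S U V) P''.
Proof.
  destruct HF1 as [_ HF1'], HV as [_ HVi].
  intros HP [_ HP1] [HN2 HP2]. split; [exact HN2|]. intros x. rewrite HP2. split.
  - intros [[Hx HxV]|[v [Hv [HvP ->]]]].
    + apply HP1 in Hx as [[Hx HxU]|[u [Hu [HuP ->]]]].
      * left. split; auto. intros Hw. apply rebase_sub_In in Hw. tauto.
      * right. exists u. split; [|split]; auto. apply rebase_sub_In.
        split; [apply HU|]; auto.
    + assert (Hv' := HVi v Hv). apply HF1' in Hv' as [[Hv1 Hv2]|[u [Hu ->]]].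
      * right. exists v; split; [apply rebase_sub_In; auto|split; auto].
        intros H. apply HvP, HP1. auto.
      * rewrite inv_involutive. left. split.
        -- apply NNPP. intros H. apply HvP, HP1. right. exists u. auto.
        -- intros Hw. apply rebase_sub_In in Hw as [_ [[_ H]|[_ H]]]; contradiction.
  - intros [[Hx Hw]|[w [Hw [HwP ->]]]].
    + destruct (classic (In x U)) as [HxU|HxU].
      * right. exists (inv x). rewrite inv_involutive. split; [|split]; auto.
        -- apply NNPP. intros H. apply Hw, rebase_sub_In. auto.
        -- intros H. apply HP1 in H as [[H1 H2]|[u [Hu [HuP E]]]].
           ++ apply H2. rewrite (precubic_inv_mem S x HS); auto.
           ++ apply inv_inj in E. subst. contradiction.
      * left. split; [apply HP1; auto|]. intros H. apply Hw, rebase_sub_In. auto.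
    + apply rebase_sub_In in Hw as [HwS [[H1 H2]|[H1 H2]]].
      * right. exists w; split; auto; split; auto.
        intros H. apply HP1 in H as [[H3 H4]|[u [Hu [HuP E]]]]; [contradiction|].
        apply H2. rewrite E, (precubic_inv_mem S u HS); [|apply HU|rewrite <- E]; auto.
      * left. split; auto. apply HP1. right. exists w; auto.
Qed.

End Compose.

Local Notation ceq := (corner_equiv mul one inv).

Lemma corner_equiv_trans (c c' c'' : corner) :
  precubic (cset c) -> incl (cpos c) (cset c) -> ceq c c' -> ceq c' c'' -> ceq c c''.
Proof.
  destruct c as [B S P], c' as [B' S' P'], c'' as [B'' S'' P'']; simpl.
  intros HS HP [U [HU [EB [HF1 HM1]]]] [V [HV [EB' [HF2 HM2]]]]. simpl in *.
  exists (rebase_sub S U V). simpl. split; [apply rebase_sub_subl, HS|split].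
  - rewrite EB', EB, mul_assoc, (rebase_prod S U S' V); auto.
  - split; [eapply flipped_compose|eapply moved_compose]; eauto.
Qed.

Variable D : G -> Prop.
Local Notation XD := (in_XD mul one glide ind D).
Local Notation cat := (corner_at mul one glide ind D).

Lemma in_XD_precubic B S : XD B S -> precubic S.
Proof. intros [[H _] _]; exact H. Qed.

(* Cubes of X_D are well defined: rebasing a based cube of X_D gives a based
   cube of X_D (cubicity and the vertices transfer by rebase_prod). *)
Lemma in_XD_flipped B S U S' : XD B S -> subl U S -> flipped inv S U S' ->
  XD (mul (pr U) B) S'.
Proof.
  intros [[HP HC] HV] [HUn HUi] HF.
  assert (HSn : NoDup S) by apply HP.
  assert (HU : subl U S) by (split; auto).
  split; [split|].
  - apply (precubic_flipped S U); auto.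
  - intros T1 T2 H1 H2 E.
    assert (E' : same_set (rebase_sub S U T1) (rebase_sub S U T2)).
    { apply HC; try apply rebase_sub_subl; auto.
      rewrite (rebase_prod S U S' T1), (rebase_prod S U S' T2), E; auto. }
    intros x; split; intros Hx.
    + apply (rebase_sub_incl S U S' HU HF T1 T2); auto; apply H1.
    + apply (rebase_sub_incl S U S' HU HF T2 T1); auto; [apply H2|].
      intros y; specialize (E' y); tauto.
  - intros T HT. rewrite mul_assoc, <- (rebase_prod S U S' T); auto.
    apply HV, rebase_sub_subl; auto.
Qed.

Lemma in_XD_same_set A S S' : precubic S -> same_set S S' -> XD A S' -> XD A S.
Proof.
  intros HS HE [[_ HC] HV].
  assert (Hsub : forall T, subl T S -> subl T S')
    by (intros T [Hn Hi]; split; auto; intros x Hx; apply HE, Hi, Hx).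
  split; [split; [exact HS|]|]; auto.
Qed.

(* The normal form of the corner at the vertex [T]B of the based cube (B,S):
   the same cube based at that vertex, with glides (S \ T) ∪ T^-1. *)
Definition normal_form (S T : list G) : list G :=
  filter (fun x => holds (~ In x T)) S ++ map inv T.

(* The direction, seen from the vertex at position T, of the edge of the
   cube parallel to s ∈ S. *)
Definition edge_direction (T : list G) (s x : G) : Prop :=
  (In s T /\ x = inv s) \/ (~ In s T /\ x = s).

Lemma normal_form_In S T x : In x (normal_form S T) <->
  (In x S /\ ~ In x T) \/ (exists u, In u T /\ x = inv u).
Proof.
  unfold normal_form. rewrite in_app_iff, filter_In, holds_true, in_map_iff.
  split; intros [H|[u [E H]]]; eauto.
Qed.

Lemma normal_form_directions S T x : incl T S ->
  (In x (normal_form S T) <-> exists s, In s S /\ edge_direction T s x).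
Proof.
  intros HT. rewrite normal_form_In. unfold edge_direction. split.
  - intros [[H1 H2]|[u [Hu ->]]]; [exists x|exists u]; auto.
  - intros [s [Hs [[H1 ->]|[H1 ->]]]]; eauto.
Qed.

Lemma normal_form_flipped S T : precubic S -> subl T S -> flipped inv S T (normal_form S T).
Proof.
  intros HS [HTn HTi]. split; [|intros x; apply normal_form_In].
  apply NoDup_app.
  - apply NoDup_filter, HS.
  - apply FinFun.Injective_map_NoDup; auto. intros a b; apply inv_inj.
  - intros a Ha Hb. rewrite filter_In, holds_true in Ha.
    apply in_map_iff in Hb as [t [<- Ht]].
    apply (proj2 Ha). rewrite (precubic_inv_mem S t HS); auto. tauto.
Qed.

Lemma normal_form_in_XD A c : cat A c -> XD A (normal_form (cset c) (cpos c)).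
Proof.
  intros [HX [HT <-]]. apply (in_XD_flipped _ (cset c)); auto.
  apply normal_form_flipped; auto. apply (in_XD_precubic (cbase c)), HX.
Qed.

Definition base_corner (A : G) (S : list G) : corner := Corner A S [].

Lemma base_corner_at A S : XD A S -> cat A (base_corner A S).
Proof. intros HX. split; auto. split; [split; [constructor|intros x []]|apply mul_1l]. Qed.

Lemma corner_to_normal_form A c : cat A c ->
  ceq c (base_corner A (normal_form (cset c) (cpos c))).
Proof.
  intros [HX [HT E]]. exists (cpos c). simpl. split; [auto|split; [auto|split]].
  - apply normal_form_flipped; auto. apply (in_XD_precubic (cbase c)), HX.
  - split; [constructor|]. intros x; split; [intros []|].
    intros [[H1 H2]|[u [H1 [H2 _]]]]; contradiction.
Qed.

Lemma normal_form_to_corner A c : cat A c ->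
  ceq (base_corner A (normal_form (cset c) (cpos c))) c.
Proof.
  destruct c as [B S T]. intros [HX [[HTn HTi] E]]. simpl in *.
  assert (HS : precubic S) by apply (in_XD_precubic B S HX).
  exists (map inv T). simpl. split; [split|split].
  - apply FinFun.Injective_map_NoDup; auto. intros a b; apply inv_inj.
  - intros x Hx. apply normal_form_In. apply in_map_iff in Hx as [t [<- Ht]]. eauto.
  - rewrite <- E, mul_assoc, prodl_map_inv, mul_1l; auto.
    apply (precubic_commuting S); auto. intros x Hx. apply in_app_or in Hx as [Hx|Hx].
    + apply letters_l; auto.
    + apply in_map_iff in Hx as [t [<- Ht]]; apply letters_r; auto.
  - split; [split; [apply HS|]|split; auto].
    + intros x. rewrite normal_form_In. split.
      * intros Hx. destruct (classic (In x T)) as [H|H].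
        -- right. exists (inv x). rewrite inv_involutive. split; auto. apply in_map; auto.
        -- left. split; auto. intros Hm. apply in_map_iff in Hm as [t [<- Ht]].
           apply H. rewrite (precubic_inv_mem S t HS); auto.
      * intros [[[[H1 H2]|[u [Hu ->]]] H3]|[u [Hu ->]]]; auto.
        -- exfalso. apply H3, in_map; auto.
        -- apply in_map_iff in Hu as [t [<- Ht]]. rewrite inv_involutive. auto.
    + intros x. split.
      * intros Hx. right. exists (inv x). rewrite inv_involutive.
        split; [apply in_map; auto|split; auto].
      * intros [[[] _]|[u [Hu [_ ->]]]].
        apply in_map_iff in Hu as [t [<- Ht]]. rewrite inv_involutive. auto.
Qed.

Lemma base_corner_same_set A E1 E2 : same_set E1 E2 -> NoDup E2 ->
  ceq (base_corner A E1) (base_corner A E2).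
Proof.
  intros Hs Hn. exists []. simpl. split; [split; [constructor|intros x []]|].
  split; [rewrite mul_1l; auto|]. split; [split; auto|].
  - intros x. rewrite <- (Hs x). split; auto. intros [[H _]|[u [[] _]]]; auto.
  - split; [constructor|]. intros x; split; [intros []|]. intros [[[] _]|[u [[] _]]].
Qed.

(* A link vertex at A is the corner at A of an edge
   (B,[s]); it [points_to] the glide d such that the other endpoint of the
   edge is dA. *)
Definition points_to (A : G) (v : corner) (d : G) : Prop :=
  exists s, cset v = [s] /\
    ((cpos v = [] /\ cbase v = A /\ d = s) \/
     (cpos v = [s] /\ mul s (cbase v) = A /\ d = inv s)).

Lemma points_to_fun A v d1 d2 : points_to A v d1 -> points_to A v d2 -> d1 = d2.
Proof.
  intros [s [E1 H1]] [t [E2 H2]]. rewrite E1 in E2. injection E2 as <-.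
  destruct H1 as [[P1 [B1 ->]]|[P1 [B1 ->]]], H2 as [[P2 [B2 ->]]|[P2 [B2 ->]]]; auto;
    rewrite P1 in P2; discriminate.
Qed.

Lemma edge_corner_equiv_cases v w s : ceq v w -> cset v = [s] ->
  (cset w = [s] /\ cbase w = cbase v /\ (forall x, In x (cpos w) <-> In x (cpos v))) \/
  (cset w = [inv s] /\ cbase w = mul s (cbase v) /\
     (forall x, In x (cpos w) <->
        (In x (cpos v) /\ x <> s) \/ (~ In s (cpos v) /\ x = inv s))).
Proof.
  intros [U [HU [EB [[HN HF] [_ HP]]]]] Es. rewrite Es in *.
  destruct (subl_singleton U s HU) as [->| ->].
  - left. split; [|split].
    + apply nodup_singleton; auto. intros x. rewrite HF. simpl. split; [|intros ->; auto].
      intros [[[H|[]] _]|[u [[] _]]]; auto.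
    + rewrite EB. apply mul_1l.
    + intros x. rewrite HP. split; auto. intros [[H _]|[u [[] _]]]; auto.
  - right. split; [|split].
    + apply nodup_singleton; auto. intros x. rewrite HF. simpl. split.
      * intros [[[H|[]] H']|[u [[H|[]] E]]]; subst; auto. exfalso; auto.
      * intros ->. right. exists s; auto.
    + rewrite EB. simpl. rewrite mul_1r; auto.
    + intros x. rewrite HP. simpl. split.
      * intros [[H1 H2]|[u [[H|[]] [H1 E]]]]; [left; split; auto|right; subst; auto].
      * intros [[H1 H2]|[H1 E]]; [left; split; auto; intros [H|[]]; auto|].
        right. exists s; auto.
Qed.

Lemma points_to_equiv A v w d : points_to A v d -> ceq v w -> points_to A w d.
Proof.
  intros [s [Es H]] Hq.
  assert (Hn : NoDup (cpos w)) by (destruct Hq as [U [_ [_ [_ [Hn _]]]]]; exact Hn).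
  destruct (edge_corner_equiv_cases v w s Hq Es) as [[Ew [Bw Pw]]|[Ew [Bw Pw]]].
  - exists s. split; auto. destruct H as [[P [B ->]]|[P [B ->]]].
    + left. split; [|split]; auto; [|rewrite Bw; auto].
      apply empty_list. intros x Hx. apply Pw in Hx. rewrite P in Hx; auto.
    + right. split; [|split]; auto; [|rewrite Bw; auto].
      apply nodup_singleton; auto.
      intros x. rewrite Pw, P. simpl. split; [intros [->|[]]|]; auto.
  - exists (inv s). split; auto. destruct H as [[P [B ->]]|[P [B ->]]].
    + right. split; [|split].
      * apply nodup_singleton; auto. intros x. rewrite Pw, P. simpl. split.
        -- intros [[[] _]|[_ E]]; auto.
        -- intros ->. right; auto.
      * rewrite Bw, B. apply mul_KV.
      * rewrite inv_involutive; auto.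
    + left. split; [|split]; auto; [|rewrite Bw; auto].
      apply empty_list. intros x Hx. apply Pw in Hx. rewrite P in Hx. simpl in Hx.
      destruct Hx as [[[H|[]] H2]|[H1 _]]; auto.
Qed.

Lemma edge_corner_equiv_same v w s : cset v = [s] -> cset w = [s] ->
  cbase w = cbase v -> cpos w = cpos v -> NoDup (cpos v) -> ceq v w.
Proof.
  intros Ev Ew Bw Pw Hn. exists []. split; [split; [constructor|intros x []]|].
  rewrite Ev, Ew, Pw, Bw. simpl. rewrite mul_1l. split; auto. split.
  - split; [repeat constructor; auto|]. intros x. split; auto.
    intros [[H _]|[u [[] _]]]; auto.
  - split; auto. intros x. split; auto. intros [[H _]|[u [[] _]]]; auto.
Qed.

Lemma edge_corner_equiv_flip v w s : cset v = [s] -> cset w = [inv s] ->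
  cbase w = mul s (cbase v) ->
  (cpos v = [] /\ cpos w = [inv s]) \/ (cpos v = [s] /\ cpos w = []) -> ceq v w.
Proof.
  intros Ev Ew Bw Hp. exists [s]. rewrite Ev, Ew, Bw. simpl. rewrite mul_1r.
  split; [split; [repeat constructor; auto|intros x Hx; auto]|]. split; auto. split.
  - split; [repeat constructor; auto|]. intros x. simpl. split.
    + intros [<-|[]]. right. exists s; auto.
    + intros [[H1 H2]|[u [[<-|[]] E]]]; [contradiction|left; auto].
  - destruct Hp as [[P1 P2]|[P1 P2]]; rewrite P1, P2; simpl;
      split; try solve [repeat constructor; auto].
    + intros x; split.
      * intros [<-|[]]. right. exists s; auto.
      * intros [[[] _]|[u [[<-|[]] [_ E]]]]; auto.
    + intros x; split; [intros []|]. intros [[H1 H2]|[u [[<-|[]] [H _]]]]; auto.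
Qed.

Lemma points_to_same_equiv A v w d : points_to A v d -> points_to A w d -> ceq v w.
Proof.
  intros [s [Ev Hv]] [t [Ew Hw]].
  destruct Hv as [[Pv [Bv ->]]|[Pv [Bv ->]]], Hw as [[Pw [Bw E]]|[Pw [Bw E]]].
  - subst t. apply (edge_corner_equiv_same _ _ s); auto; [congruence|congruence|].
    rewrite Pv; constructor.
  - assert (t = inv s) as -> by (rewrite E, inv_involutive; auto).
    apply (edge_corner_equiv_flip _ _ s); auto. rewrite Bv, <- Bw, mul_VK. auto.
  - subst t. apply (edge_corner_equiv_flip _ _ s); auto. congruence.
  - apply inv_inj in E. subst t. apply (edge_corner_equiv_same _ _ s); auto.
    + apply (mul_cancel_l s). congruence.
    + congruence.
    + rewrite Pv. repeat constructor; auto.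
Qed.

Lemma link_vertex_direction A v : cat A v -> length (cset v) = 1 ->
  exists d, points_to A v d /\ glide d /\ D (mul d A).
Proof.
  destruct v as [B S P]. simpl. intros [HX [[HPn HPi] E]] Hl. simpl in *.
  destruct S as [|s [|s' S]]; try discriminate.
  assert (Hg : glide s) by (apply (in_XD_precubic _ _ HX); simpl; auto).
  destruct HX as [_ HV].
  destruct (subl_singleton P s (conj HPn HPi)) as [->| ->]; simpl in E.
  - rewrite mul_1l in E. subst B. exists s. split; [exists s; simpl; auto|split; auto].
    specialize (HV [s]). simpl in HV. rewrite mul_1r in HV. apply HV.
    split; [repeat constructor; auto|intros x Hx; auto].
  - rewrite mul_1r in E. exists (inv s). split; [exists s; simpl; auto|split].
    + apply glide_inv; auto.
    + rewrite <- E, mul_KV. specialize (HV []). simpl in HV. rewrite mul_1l in HV.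
      apply HV. split; [constructor|intros x []].
Qed.

Lemma face_exists c s : NoDup (cpos c) -> In s (cset c) ->
  exists f, face_corner mul one c [s] f.
Proof.
  intros Hn Hs.
  set (W := filter (fun x => holds (~ In x [s])) (cpos c)).
  set (Q := filter (fun x => holds (In x [s])) (cpos c)).
  exists (Corner (mul (pr W) (cbase c)) [s] Q). unfold face_corner; simpl.
  split; [split; [repeat constructor; auto|intros x [<-|[]]; auto]|].
  split; [repeat constructor; auto|]. split; [intros x; tauto|].
  split; [apply NoDup_filter; auto|]. split.
  - intros x. unfold Q. rewrite filter_In, holds_true. simpl. tauto.
  - exists W. split; [apply NoDup_filter; auto|]. split; auto.
    intros x. unfold W. rewrite filter_In, holds_true. simpl. tauto.
Qed.

Lemma edge_direction_exists T s : exists d, edge_direction T s d.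
Proof.
  destruct (classic (In s T)); [exists (inv s); left|exists s; right]; auto.
Qed.

Lemma edge_direction_inj S T s1 s2 x : precubic S -> In s1 S -> In s2 S ->
  edge_direction T s1 x -> edge_direction T s2 x -> s1 = s2.
Proof.
  intros HS H1 H2 [[T1 ->]|[T1 ->]] [[T2 E]|[T2 E]].
  - apply inv_inj; auto.
  - rewrite <- E, (precubic_inv_mem S s1 HS); rewrite ?E; auto.
  - rewrite E, (precubic_inv_mem S s2 HS); rewrite <- ?E; auto.
  - auto.
Qed.

Lemma face_points_to A c s f : cat A c -> In s (cset c) -> face_corner mul one c [s] f ->
  forall d, edge_direction (cpos c) s d -> points_to A f d.
Proof.
  destruct c as [B S T]. intros [HX [[HTn HTi] E]] Hs Hf. simpl in *.
  destruct Hf as [_ [Hn1 [Hs1 [Hn2 [Hp [W [HWn [HW EB]]]]]]]]. simpl in *.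
  assert (HS : precubic S) by apply (in_XD_precubic B S HX).
  assert (Ef : cset f = [s]).
  { apply nodup_singleton; auto. intros x. rewrite (Hs1 x). simpl.
    split; [intros [->|[]]|intros ->]; auto. }
  assert (HcT : commuting T) by (apply (precubic_commuting_sub S); auto).
  intros d [[HsT ->]|[HsT ->]]; exists s; split; auto.
  - right. split; [|split]; auto.
    + apply nodup_singleton; auto. intros x. rewrite Hp. simpl.
      split; [intros [_ [->|[]]]|intros ->]; auto.
    + rewrite EB, mul_assoc, <- E. f_equal. change (mul s (pr W)) with (pr (s :: W)).
      apply prodl_perm.
      * apply NoDup_Permutation; auto.
        -- constructor; auto. intros H. apply HW in H. simpl in H. tauto.
        -- intros x. simpl. rewrite HW. simpl. split; [intros [<-|[H1 H2]]; auto|].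
           intros Hx. destruct (classic (s = x)); auto. right. split; auto. tauto.
      * apply (commuting_incl T); auto. intros x [<-|Hx]; auto. apply HW in Hx; tauto.
  - left. split; [|split]; auto.
    + apply empty_list. intros x Hx. apply Hp in Hx. simpl in Hx.
      destruct Hx as [H1 [<-|[]]]; auto.
    + rewrite EB, <- E. f_equal. apply prodl_perm.
      * apply NoDup_Permutation; auto. intros x. rewrite HW. simpl. split; [tauto|].
        intros Hx. split; auto. intros [<-|[]]; auto.
      * apply (commuting_incl T); auto. intros x Hx; apply HW in Hx; tauto.
Qed.

Lemma vertex_direction A c w : cat A c -> vertex_of mul one c w ->
  exists x, In x (normal_form (cset c) (cpos c)) /\ points_to A w x.
Proof.
  intros Hc [s [Hs Hf]]. destruct (edge_direction_exists (cpos c) s) as [d Hd].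
  exists d. split; [|apply (face_points_to A c s); auto].
  apply normal_form_directions; [apply Hc|eauto].
Qed.

Lemma normal_form_vertex A c x : cat A c -> In x (normal_form (cset c) (cpos c)) ->
  exists w, vertex_of mul one c w /\ points_to A w x.
Proof.
  intros Hc Hx. apply normal_form_directions in Hx as [s [Hs Hd]]; [|apply Hc].
  destruct (face_exists c s) as [f Hf]; [apply Hc|auto|].
  exists f. split; [exists s; auto|apply (face_points_to A c s); auto].
Qed.

Lemma vertex_direction_in_normal_form A c w x : cat A c -> vertex_of mul one c w ->
  points_to A w x -> In x (normal_form (cset c) (cpos c)).
Proof.
  intros Hc Hw Hx. destruct (vertex_direction A c w Hc Hw) as [y [Hy Hwy]].
  rewrite (points_to_fun A w x y); auto.
Qed.

Lemma normal_form_nil S x : In x (normal_form S []) <-> In x S.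
Proof. rewrite normal_form_In. split; [intros [[H _]|[u [[] _]]]|]; auto. Qed.

Local Notation lsimp := (link_simplex mul one glide ind D).

(* Its vertices are
   distinct since distinct glides of a cube give distinct directions, and a
   simplex is determined by its vertices since those determine its normal
   form. *)

Lemma link_simplex_vertices_distinct A c s1 s2 v1 v2 : lsimp A c ->
  In s1 (cset c) -> In s2 (cset c) ->
  face_corner mul one c [s1] v1 -> face_corner mul one c [s2] v2 -> ceq v1 v2 -> s1 = s2.
Proof.
  intros [Hc _] H1 H2 F1 F2 Hq.
  destruct (edge_direction_exists (cpos c) s1) as [d1 Hd1].
  destruct (edge_direction_exists (cpos c) s2) as [d2 Hd2].
  assert (P1 : points_to A v2 d1)
    by (apply (points_to_equiv A v1); auto; apply (face_points_to A c s1); auto).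
  assert (P2 : points_to A v2 d2) by (apply (face_points_to A c s2); auto).
  rewrite (points_to_fun A v2 d1 d2 P1 P2) in Hd1.
  apply (edge_direction_inj (cset c) (cpos c) s1 s2 d2); auto.
  apply (in_XD_precubic (cbase c)), Hc.
Qed.

Lemma link_simplex_normal_form_incl A c1 c2 : lsimp A c1 -> lsimp A c2 ->
  (forall v, vertex_of mul one c1 v -> exists v', vertex_of mul one c2 v' /\ ceq v v') ->
  incl (normal_form (cset c1) (cpos c1)) (normal_form (cset c2) (cpos c2)).
Proof.
  intros [H1 _] [H2 _] Hv x Hx.
  destruct (normal_form_vertex A c1 x H1 Hx) as [f [Hf Hfx]].
  destruct (Hv f Hf) as [v' [Hv' Hq]].
  apply (vertex_direction_in_normal_form A c2 v'); auto.
  apply (points_to_equiv A f); auto.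
Qed.

Lemma link_simplex_determined A c1 c2 : lsimp A c1 -> lsimp A c2 ->
  (forall v, vertex_of mul one c1 v -> exists v', vertex_of mul one c2 v' /\ ceq v v') ->
  (forall v, vertex_of mul one c2 v -> exists v', vertex_of mul one c1 v' /\ ceq v v') ->
  ceq c1 c2.
Proof.
  intros L1 L2 Ha Hb.
  assert (I1 := link_simplex_normal_form_incl A c1 c2 L1 L2 Ha).
  assert (I2 := link_simplex_normal_form_incl A c2 c1 L2 L1 Hb).
  destruct L1 as [C1 _], L2 as [C2 _].
  assert (HP1 : precubic (cset c1)) by (apply (in_XD_precubic (cbase c1)), C1).
  assert (N2 : NoDup (normal_form (cset c2) (cpos c2)))
    by (apply (in_XD_precubic A), normal_form_in_XD, C2).
  apply (corner_equiv_trans c1 (base_corner A (normal_form (cset c2) (cpos c2))));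
    [auto|apply C1| |apply normal_form_to_corner; auto].
  apply (corner_equiv_trans c1 (base_corner A (normal_form (cset c1) (cpos c1))));
    [auto|apply C1|apply corner_to_normal_form; auto|].
  apply base_corner_same_set; auto. intros x; split; auto.
Qed.

Lemma link_simplicial_everywhere A : link_simplicial mul one inv glide ind D A.
Proof.
  split; [apply link_simplex_vertices_distinct|apply link_simplex_determined].
Qed.

(* The cube condition fills cubes: if the vertices of dimension at most 2 of
   a pre-cubic S based at A lie in D, then all its vertices [T]A do, by
   induction on |T| applying the cube condition at [R]A for T = {x,y,z} ∪ R. *)
Lemma cube_condition_vertices S A : cube_condition mul glide ind D -> precubic S -> D A ->
  (forall x, In x S -> D (mul x A)) ->
  (forall x y, In x S -> In y S -> x <> y -> D (mul x (mul y A))) ->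
  forall T, subl T S -> D (mul (pr T) A).
Proof.
  intros Hcc HS HA H1 H2.
  enough (Hn : forall n T, length T <= n -> subl T S -> D (mul (pr T) A))
    by (intros T; apply (Hn (length T)); auto).
  induction n as [|n IH]; intros T Hl [HTn HTi].
  { destruct T; [simpl; rewrite mul_1l; auto|simpl in Hl; lia]. }
  destruct T as [|x [|y [|z R]]]; simpl.
  - rewrite mul_1l; auto.
  - rewrite mul_1r. apply H1, HTi; simpl; auto.
  - rewrite mul_1r, <- mul_assoc. apply H2; try (apply HTi; simpl; auto).
    intros ->. inversion HTn; simpl in *; tauto.
  - simpl in Hl. rewrite <- !mul_assoc.
    assert (Hsub : forall L, incl L (x :: y :: z :: R) -> NoDup L -> length L <= n ->
              D (mul (pr L) A))
      by (intros L Hi Hn Hln; apply IH; auto; split; auto; intros a Ha; apply HTi, Hi, Ha).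
    assert (Hxyz : ~ In x (y :: z :: R) /\ ~ In y (z :: R) /\ ~ In z R /\ NoDup R).
    { inversion HTn as [|? ? Hx HTn1]; inversion HTn1 as [|? ? Hy HTn2];
        inversion HTn2 as [|? ? Hz HRn]; subst; auto. }
    destruct Hxyz as [Hx [Hy [Hz HRn]]].
    destruct HS as [_ [Hg Hi]].
    assert (Ix : In x S) by (apply HTi; simpl; auto).
    assert (Iy : In y S) by (apply HTi; simpl; auto).
    assert (Iz : In z S) by (apply HTi; simpl; auto).
    assert (Hxy : x <> y) by (intros ->; simpl in Hx; tauto).
    assert (Hxz : x <> z) by (intros ->; simpl in Hx; tauto).
    assert (Hyz : y <> z) by (intros ->; simpl in Hy; tauto).
    apply Hcc; auto;
      repeat rewrite <- prodl_cons_act;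
      [apply (Hsub R)|apply (Hsub (x :: R))|apply (Hsub (y :: R))|apply (Hsub (z :: R))
      |apply (Hsub (x :: y :: R))|apply (Hsub (x :: z :: R))|apply (Hsub (y :: z :: R))];
      simpl; try lia; try (intros a Ha; simpl in *; tauto);
      repeat constructor; simpl in *; tauto.
Qed.

Lemma base_corner_vertex A S w : XD A S -> vertex_of mul one (base_corner A S) w ->
  exists s, In s S /\ points_to A w s.
Proof.
  intros HX Hw. destruct (vertex_direction A _ w (base_corner_at A S HX) Hw) as [s [Hs Hp]].
  exists s. split; auto. apply normal_form_nil, Hs.
Qed.

Lemma base_corner_vertex_exists A S s : XD A S -> In s S ->
  exists w, vertex_of mul one (base_corner A S) w /\ points_to A w s.
Proof.
  intros HX Hs. apply (normal_form_vertex A (base_corner A S)); [apply base_corner_at; auto|].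
  apply normal_form_nil, Hs.
Qed.

Lemma base_corner_spans A S (V : list corner) :
  XD A S -> S <> [] ->
  (forall x, In x S -> exists v, In v V /\ points_to A v x) ->
  (forall v, In v V -> exists x, In x S /\ points_to A v x) ->
  exists c, link_simplex mul one glide ind D A c /\
    (forall v, In v V -> exists w, vertex_of mul one c w /\ ceq v w) /\
    (forall w, vertex_of mul one c w -> exists v, In v V /\ ceq v w).
Proof.
  intros HX Hne HSV HVS. exists (base_corner A S). split; [split; auto|split].
  - apply base_corner_at; auto.
  - intros v Hv. destruct (HVS v Hv) as [x [Hx Hvx]].
    destruct (base_corner_vertex_exists A S x HX Hx) as [w [Hw Hwx]].
    exists w. split; auto. apply (points_to_same_equiv A v w x); auto.
  - intros w Hw. destruct (base_corner_vertex A S w HX Hw) as [x [Hx Hwx]].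
    destruct (HSV x Hx) as [v [Hv Hvx]].
    exists v. split; auto. apply (points_to_same_equiv A v w x); auto.
Qed.

(* Two link vertices joined by an edge of the link point in independent
   directions x, y with xyA ∈ D: both are glides of the normal form of the
   edge, which is a square of X_D based at A. *)
Lemma link_edge_directions A e w1 w2 x y :
  link_simplex mul one glide ind D A e -> vertex_of mul one e w1 -> vertex_of mul one e w2 ->
  points_to A w1 x -> points_to A w2 y -> x <> y -> ind x y /\ D (mul x (mul y A)).
Proof.
  intros [He _] Hw1 Hw2 Hx Hy Hxy.
  assert (M1 := vertex_direction_in_normal_form A e w1 x He Hw1 Hx).
  assert (M2 := vertex_direction_in_normal_form A e w2 y He Hw2 Hy).
  assert (HX := normal_form_in_XD A e He).
  split; [apply (in_XD_precubic _ _ HX); auto|].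
  destruct HX as [_ HV]. specialize (HV [x; y]). simpl in HV.
  rewrite mul_1r, <- mul_assoc in HV. apply HV.
  split; [repeat constructor; simpl; intuition|intros a [<-|[<-|[]]]; auto].
Qed.

(* Regularity and the cube condition make the link flag: the directions of a
   pairwise joined family of link vertices form a pre-cubic set whose 1- and
   2-vertices lie in D; it is cubic by regularity, its cube lies in X_D by the
   cube condition, and its base corner is the required simplex. *)
Lemma link_flag_of_regular A : regular mul one glide ind D -> cube_condition mul glide ind D ->
  D A -> link_flag mul one inv glide ind D A.
Proof.
  intros Hreg Hcc HA V HVne Hlv Hpair.
  destruct (choose_images (points_to A) V) as [S [HSn [HSV HVS]]].
  { intros v Hv. destruct (link_vertex_direction A v) as [d [Hd _]]; try apply Hlv; eauto. }
  assert (H1 : forall x, In x S -> glide x /\ D (mul x A)).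
  { intros x Hx. destruct (HSV x Hx) as [v [Hv Hd]].
    destruct (link_vertex_direction A v) as [d [Hd' [Hg HD]]]; try apply Hlv; auto.
    rewrite (points_to_fun A v x d); auto. }
  assert (H2 : forall x y, In x S -> In y S -> x <> y -> ind x y /\ D (mul x (mul y A))).
  { intros x y Hx Hy Hxy.
    destruct (HSV x Hx) as [v1 [Hv1 Hd1]], (HSV y Hy) as [v2 [Hv2 Hd2]].
    destruct (Hpair v1 v2 Hv1 Hv2) as [e [w1 [w2 [He [_ [Hw1 [Hw2 [Hq1 Hq2]]]]]]]].
    { intros Hq. apply Hxy, (points_to_fun A v2); auto. apply (points_to_equiv A v1); auto. }
    apply (link_edge_directions A e w1 w2); auto; eapply points_to_equiv; eauto. }
  assert (HP : precubic S) by (repeat split; auto; intros; apply H1 || apply H2; auto).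
  assert (HXS : XD A S).
  { split; [apply (Hreg A HA S HP); intros; apply H1 || apply H2; auto|].
    apply (cube_condition_vertices S A); auto; intros; apply H1 || apply H2; auto. }
  apply (base_corner_spans A S V); auto.
  destruct V as [|v V]; [contradiction|].
  destruct (HVS v) as [x [Hx _]]; [simpl; auto|]. destruct S; [contradiction|discriminate].
Qed.

Lemma spanned_simplex_normal_form A c S (V : list corner) : cat A c ->
  (forall x, In x S -> exists v, In v V /\ points_to A v x) ->
  (forall v, In v V -> exists x, In x S /\ points_to A v x) ->
  (forall v, In v V -> exists w, vertex_of mul one c w /\ ceq v w) ->
  (forall w, vertex_of mul one c w -> exists v, In v V /\ ceq v w) ->
  same_set S (normal_form (cset c) (cpos c)).
Proof.
  intros Hc HSV HVS HVc HcV x. split.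
  - intros Hx. destruct (HSV x Hx) as [v [Hv Hvx]]. destruct (HVc v Hv) as [w [Hw Hq]].
    apply (vertex_direction_in_normal_form A c w); auto.
    apply (points_to_equiv A v); auto.
  - intros Hx. destruct (normal_form_vertex A c x Hc Hx) as [f [Hf Hfx]].
    destruct (HcV f Hf) as [v [Hv Hq]]. destruct (HVS v Hv) as [y [Hy Hvy]].
    rewrite (points_to_fun A f x y); auto. apply (points_to_equiv A v); auto.
Qed.

Lemma in_XD_edge A s : glide s -> D A -> D (mul s A) -> XD A [s].
Proof.
  intros Hg HA Hs. assert (Hs1 := glide_ne1 s Hg).
  split; [split|].
  - split; [repeat constructor; auto|split].
    + intros x [<-|[]]; auto.
    + intros x y [<-|[]] [<-|[]] H; contradiction.
  - intros T1 T2 H1 H2 E.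
    destruct (subl_singleton T1 s H1) as [->| ->], (subl_singleton T2 s H2) as [->| ->];
      simpl in E; rewrite ?mul_1r in E; try (intros x; tauto); congruence.
  - intros T HT. destruct (subl_singleton T s HT) as [->| ->]; simpl;
      rewrite ?mul_1l, ?mul_1r; auto.
Qed.

Lemma in_XD_square A s t : ind s t -> D A -> D (mul s A) -> D (mul t A) ->
  D (mul s (mul t A)) -> XD A [s; t].
Proof.
  intros Hi HA Hs Ht Hst'.
  assert (Hst := ind_neq s t Hi).
  assert (Hgs : glide s /\ glide t) by (apply HGS, Hi).
  assert (Hs1 := glide_ne1 s (proj1 Hgs)). assert (Ht1 := glide_ne1 t (proj2 Hgs)).
  assert (Hc := ind_comm s t Hi). assert (Hn1 := ind_ne1 s t Hi).
  assert (N1 : mul s t <> s) by (intros E; apply Ht1, (mul_cancel_l s); rewrite mul_1r; auto).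
  assert (N2 : mul s t <> t) by (intros E; apply Hs1, (mul_cancel_r t); rewrite mul_1l; auto).
  split; [split|].
  - split; [repeat constructor; simpl; intuition|split].
    + intros x [<-|[<-|[]]]; tauto.
    + intros x y [<-|[<-|[]]] [<-|[<-|[]]] H; try contradiction; auto. apply ind_sym; auto.
  - intros T1 T2 H1 H2 E.
    destruct (subl_pair T1 s t H1) as [->|[->|[->|[->| ->]]]],
             (subl_pair T2 s t H2) as [->|[->|[->|[->| ->]]]];
      simpl in E; rewrite ?mul_1r in E; try (intros x; simpl; tauto); congruence.
  - intros T HT. destruct (subl_pair T s t HT) as [->|[->|[->|[->| ->]]]]; simpl;
      rewrite ?mul_1l, ?mul_1r, <- ?mul_assoc; auto.
    rewrite mul_assoc, <- Hc, <- mul_assoc; auto.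
Qed.

Local Notation NPC := (nonpositively_curved mul one inv glide ind D).

(* The edges (A,[s]) give pairwise joined link vertices, which span a simplex
   whose normal form is S. *)
Lemma npc_fills_cubes A S : NPC -> D A -> precubic S -> S <> [] ->
  (forall s, In s S -> D (mul s A)) ->
  (forall s t, In s S -> In t S -> s <> t -> D (mul s (mul t A))) -> XD A S.
Proof.
  intros Hnpc HA HS Hne H1 H2.
  destruct (Hnpc A HA) as [_ Hflag].
  assert (Hedge : forall s, In s S -> XD A [s]) by (intros s Hs; apply in_XD_edge; auto; apply HS, Hs).
  set (edge_at := fun s => base_corner A [s]).
  assert (Hvx : forall s, points_to A (edge_at s) s) by (intros s; exists s; simpl; auto).
  assert (HSV : forall x, In x S -> exists v, In v (map edge_at S) /\ points_to A v x)
    by (intros x Hx; exists (edge_at x); split; [apply in_map|]; auto).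
  assert (HVS : forall v, In v (map edge_at S) -> exists x, In x S /\ points_to A v x)
    by (intros v Hv; apply in_map_iff in Hv as [s [<- Hs]]; eauto).
  destruct (Hflag (map edge_at S)) as [c [[Hc _] [HVc HcV]]].
  - destruct S; [contradiction|discriminate].
  - intros v Hv. apply in_map_iff in Hv as [s [<- Hs]].
    split; [apply base_corner_at|]; auto.
  - intros v1 v2 Hv1 Hv2 Hq.
    apply in_map_iff in Hv1 as [s [<- Hs]]. apply in_map_iff in Hv2 as [t [<- Ht]].
    assert (Hst : s <> t) by (intros <-; apply Hq, (points_to_same_equiv A _ _ s); auto).
    assert (HXe : XD A [s; t]) by (apply in_XD_square; auto; apply HS; auto).
    destruct (base_corner_vertex_exists A [s; t] s HXe) as [w1 [Hw1 Hp1]]; [simpl; auto|].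
    destruct (base_corner_vertex_exists A [s; t] t HXe) as [w2 [Hw2 Hp2]]; [simpl; auto|].
    exists (base_corner A [s; t]), w1, w2.
    split; [split; [apply base_corner_at|discriminate]; auto|].
    repeat split; auto; apply (points_to_same_equiv A _ _ _ (Hvx _)); auto.
  - apply (in_XD_same_set A S (normal_form (cset c) (cpos c))); auto.
    + apply (spanned_simplex_normal_form A c S (map edge_at S)); auto.
    + apply normal_form_in_XD; auto.
Qed.

Lemma npc_regular : NPC -> regular mul one glide ind D.
Proof.
  intros Hnpc A HA S HS H1 H2. destruct S as [|a S'].
  - split; auto. intros T1 T2 [_ Hi1] [_ Hi2] _.
    rewrite (empty_list T1), (empty_list T2); try (intros x; split; auto);
      intros x Hx; [apply (Hi2 x Hx)|apply (Hi1 x Hx)].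
  - apply (npc_fills_cubes A); auto. discriminate.
Qed.

Lemma npc_cube_condition : NPC -> cube_condition mul glide ind D.
Proof.
  intros Hnpc A s1 s2 s3 HA g1 g2 g3 i12 i13 i23 D1 D2 D3 D12 D13 D23.
  assert (n12 := ind_neq _ _ i12). assert (n13 := ind_neq _ _ i13).
  assert (n23 := ind_neq _ _ i23).
  assert (HS : precubic [s1; s2; s3]).
  { split; [|split].
    - repeat constructor; simpl; intuition.
    - intros x [<-|[<-|[<-|[]]]]; auto.
    - intros x y [<-|[<-|[<-|[]]]] [<-|[<-|[<-|[]]]] H; try contradiction; auto using ind_sym. }
  assert (Hswap : forall s t, ind s t -> D (mul s (mul t A)) -> D (mul t (mul s A)))
    by (intros s t Hi H; rewrite mul_assoc, <- (ind_comm s t Hi), <- mul_assoc; auto).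
  assert (HX : XD A [s1; s2; s3]).
  { apply (npc_fills_cubes A); auto; [discriminate|intros x [<-|[<-|[<-|[]]]]; auto|].
    intros x y [<-|[<-|[<-|[]]]] [<-|[<-|[<-|[]]]] H; try contradiction; auto. }
  destruct HX as [_ HV]. specialize (HV [s1; s2; s3]). simpl in HV.
  rewrite mul_1r, <- !mul_assoc in HV. apply HV. split; [apply HS|intros x Hx; auto].
Qed.

Lemma regular_cube_condition_npc :
  regular mul one glide ind D -> cube_condition mul glide ind D -> NPC.
Proof.
  intros Hreg Hcc A HA. split; [apply link_simplicial_everywhere|].
  apply link_flag_of_regular; auto.
Qed.

End GlideComplex.

Theorem theorem4p4 (G : Type) (mul : G -> G -> G) (one : G) (inv : G -> G)
  (HG : is_group mul one inv)
  (glide : G -> Prop) (ind : G -> G -> Prop)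
  (HGS : gliding_system mul one inv glide ind)
  (D : G -> Prop) :
  nonpositively_curved mul one inv glide ind D <->
  (regular mul one glide ind D /\ cube_condition mul glide ind D).
Proof.
  split.
  - intros Hnpc. split; [eapply npc_regular|eapply npc_cube_condition]; eauto.
  - intros [Hreg Hcc]. eapply regular_cube_condition_npc; eauto.
Qed.
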